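(* Let $\mathbb G$ be a symmetric directed graph on $m$ vertices (no self-arcs) with arcs enumerated $e_1,\dots,e_d$, each carrying a real matrix $C_{e_k}$ with $n$ columns, and let $C=\operatorname{blockdiag}(C_{e_1},\dots,C_{e_d})$. Let $\mathbb G_1,\dots,\mathbb G_p$ be symmetric spanning subgraphs of $\mathbb G$ whose union is $\mathbb G$. Let $J$ be the incidence matrix of $\mathbb G$, $J_i$ the spanning incidence matrix of $\mathbb G_i$, and $W_i$ the spanning weight matrix of $\mathbb G_i$; set $\bar J=J\otimes I_n$, $\bar J_i=J_i\otimes I_n$, $\bar W_i=W_i\otimes I_n$. Then $$\ker\big(C\bar J'\big)=\ker\Big(C\sum_{i=1}^p\bar W_i^{1/2}\bar J_i'\Big).$$
   Context: A directed graph is symmetric if whenever $(i,j)$ is an arc so is $(j,i)$. Incidence matrix $J\in\mathbb R^{m\times d}$: column $k$ has $+1$ in row $i$ and $-1$ in row $j$ when $e_k=(j,i)$. Spanning incidence matrix of a spanning subgraph $\mathbb H$: same as $J$ except that column $k$ is zero when $e_k$ is not an arc of $\mathbb H$. Spanning weight matrix of a symmetric spanning subgraph $\mathbb H$: the $d\times d$ diagonal matrix whose $k$th diagonal entry is $1/(1+\max\{\bar d_i,\bar d_j\})$ if $e_k=(j,i)$ is an arc of $\mathbb H$ (with $\bar d_v$ the number of neighbors of $v$ in $\mathbb H$), and $0$ otherwise. $'$ denotes transpose. *)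

From HB Require Import structures.
From mathcomp Require Import all_boot all_order all_algebra.
From mathcomp Require Export mxtens.
Set Implicit Arguments. Unset Strict Implicit. Unset Printing Implicit Defensive.
Import Order.TTheory GRing.Theory Num.Theory.
Local Open Scope ring_scope.

(* A directed graph on vertex set 'I_m with arcs enumerated by 'I_d:
   arc k is  e k = (tail, head), i.e. e_k = (j,i) is the arc from j to i. *)

Definition no_self_arcs (m d : nat) (e : 'I_d -> 'I_m * 'I_m) : Prop :=
  forall k, (e k).1 <> (e k).2.
Definition arcs_distinct (m d : nat) (e : 'I_d -> 'I_m * 'I_m) : Prop :=
  injective e.
Definition symmetric_graph (m d : nat) (e : 'I_d -> 'I_m * 'I_m) : Prop :=
  forall k, exists k' : 'I_d, e k' = ((e k).2, (e k).1).

(* A spanning subgraph H of G is given by the set of arcs of G it contains. *)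
Definition symmetric_subgraph (m d : nat) (e : 'I_d -> 'I_m * 'I_m)
  (H : pred 'I_d) : Prop :=
  forall k k', H k -> e k' = ((e k).2, (e k).1) -> H k'.

Definition nbr_count (m d : nat) (e : 'I_d -> 'I_m * 'I_m) (H : pred 'I_d)
  (v : 'I_m) : nat :=
  #|[set u : 'I_m | [exists k : 'I_d, H k && (e k == (u, v))]]|.

Definition incidence (R : pzRingType) (m d : nat) (e : 'I_d -> 'I_m * 'I_m)
  : 'M[R]_(m, d) :=
  \matrix_(v < m, k < d) ((v == (e k).2)%:R - (v == (e k).1)%:R).

Definition span_incidence (R : pzRingType) (m d : nat)
  (e : 'I_d -> 'I_m * 'I_m) (H : pred 'I_d) : 'M[R]_(m, d) :=
  \matrix_(v < m, k < d) (if H k then incidence R e v k else 0).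

Definition span_weight (R : fieldType) (m d : nat)
  (e : 'I_d -> 'I_m * 'I_m) (H : pred 'I_d) : 'M[R]_d :=
  diag_mx (\row_(k < d) (if H k then
      ((1 + maxn (nbr_count e H (e k).1) (nbr_count e H (e k).2))%:R)^-1
    else 0)).

(* principal square root of a diagonal matrix with nonnegative entries:
   entrywise square root *)
Definition diag_sqrt (R : rcfType) (k : nat) (W : 'M[R]_k) : 'M[R]_k :=
  map_mx Num.sqrt W.

Lemma sum_const_ord (d n : nat) : (\sum_(k < d) n)%N = (d * n)%N.
Proof. by rewrite sum_nat_const card_ord. Qed.

Definition blockdiag (R : pzRingType) (d n : nat) (r : 'I_d -> nat)
  (C : forall k : 'I_d, 'M[R]_(r k, n)) : 'M[R]_(\sum_(k < d) r k, d * n) :=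
  castmx (erefl, sum_const_ord d n)
    (\mxblock_(i < d, j < d) (if i == j then C i else 0 : 'M[R]_(r i, n))).

(* Since the graphs G_i span G and W_i, J_i vanish on the arcs outside G_i,
   sum_i W_i^{1/2} J_i' = D J' with D = diag(c_k), c_k = sum_i (W_i)_kk^{1/2},
   and c_k > 0 because every arc lies in some G_i.  The diagonal matrix
   D (x) I_n acts by the scalar c_k on the k-th block of columns of
   C = blockdiag(C_k), so C (D (x) I_n) = D' C with D' diagonal and positive;
   multiplying by an invertible diagonal matrix does not change the kernel. *)

From HB Require Import structures.
From mathcomp Require Import all_boot all_order all_algebra.
From mathcomp Require Import mxtens.
Import Order.TTheory GRing.Theory Num.Theory.
Local Open Scope ring_scope.

Lemma tagnat_sig1_const (d n : nat) (b : 'I_(\sum_(k < d) n)) :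
  val (tagnat.sig1 (p_ := fun _ : 'I_d => n) b) = (b %/ n)%N.
Proof.
set s := tagnat.sig1 b; set t := tagnat.sig2 b.
have n_gt0 : (0 < n)%N := leq_ltn_trans (leq0n t) (ltn_ord t).
have -> : nat_of_ord b = (s * n + t)%N.
  by rewrite [LHS]tagnat.rect -(big_ord_widen _ (fun _ => n) (ltnW (ltn_ord s)))
             sum_nat_const card_ord.
by rewrite divnMDl // divn_small ?addn0.
Qed.

Lemma tensmx1_diag (R : comPzRingType) (d n : nat) (v : 'rV[R]_d) :
  diag_mx v *t (1%:M : 'M[R]_n) =
  diag_mx (\row_b v 0 (mxtens_unindex (m:=d) (n:=n) b).1).
Proof.
apply/matrixP => a b.
case: (mxtens_indexP a) => i j; case: (mxtens_indexP b) => k l.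
rewrite tensmxE !mxE mxtens_indexK /=.
rewrite (inj_eq (can_inj (@mxtens_indexK d n))) xpair_eqE.
by case: (i == k); case: (j == l); rewrite ?mulr1 ?mulr0.
Qed.

Lemma blockdiag_mul_diag_tensmx1 (R : comPzRingType) (d n : nat)
  (r : 'I_d -> nat) (C : forall k, 'M[R]_(r k, n)) (v : 'rV[R]_d) :
  blockdiag C *m (diag_mx v *t (1%:M : 'M[R]_n)) =
  diag_mx (\row_a v 0 (tagnat.sig1 (p_ := r) a)) *m blockdiag C.
Proof.
rewrite tensmx1_diag mul_mx_diag mul_diag_mx; apply/matrixP => a b.
rewrite !mxE /blockdiag castmxE /= mxE cast_ord_id.
case: eqP => [h|_]; last by rewrite !mxE mul0r mulr0.
by rewrite mulrC; congr (v 0 _ * _); apply: val_inj; rewrite /= h tagnat_sig1_const.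
Qed.

Lemma diag_sqrt_diag_tensmx1 (R : rcfType) (d n : nat) (v : 'rV[R]_d) :
  diag_sqrt (diag_mx v *t (1%:M : 'M[R]_n)) =
  diag_mx (map_mx Num.sqrt v) *t (1%:M : 'M[R]_n).
Proof.
apply/matrixP => a b; rewrite /diag_sqrt !mxE.
by case: eqP; case: eqP; rewrite ?mulr1n ?mulr0n ?mulr1 ?mulr0 ?sqrtr0.
Qed.

Lemma tensmx_suml (R : comPzRingType) (I : finType) (m1 n1 m2 n2 : nat)
  (A : I -> 'M[R]_(m1, n1)) (B : 'M[R]_(m2, n2)) :
  (\sum_i A i) *t B = \sum_i (A i *t B).
Proof.
apply/matrixP => a b; rewrite summxE !mxE summxE mulr_suml.
by apply: eq_bigr => i _; rewrite !mxE.
Qed.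

Lemma diag_mx_mul_eq0 (R : idomainType) (k l : nat) (u : 'rV[R]_k)
  (y : 'M[R]_(k, l)) :
  (forall a, u 0 a != 0) -> (diag_mx u *m y == 0) = (y == 0).
Proof.
move=> u_neq0; rewrite mul_diag_mx.
apply/eqP/eqP => [/matrixP uy0|->]; apply/matrixP => a b; last by rewrite !mxE mulr0.
by move/eqP: (uy0 a b); rewrite !mxE mulf_eq0 (negbTE (u_neq0 a)) => /eqP.
Qed.

Lemma sum_diag_mul_span_incidence (R : comPzRingType) (m d p : nat)
  (e : 'I_d -> 'I_m * 'I_m) (H : 'I_p -> pred 'I_d) (u : 'I_p -> 'rV[R]_d) :
  (forall i k, ~~ H i k -> u i 0 k = 0) ->
  \sum_i diag_mx (u i) *m (span_incidence R e (H i))^T =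
  diag_mx (\sum_i u i) *m (incidence R e)^T.
Proof.
move=> u_supp; apply/matrixP => k v; rewrite summxE mul_diag_mx !mxE summxE mulr_suml.
apply: eq_bigr => i _; rewrite mul_diag_mx !mxE.
by case: (boolP (H i k)) => // Hik; rewrite u_supp // !mul0r.
Qed.

Section SpanWeight.

Variables (R : rcfType) (m d : nat) (e : 'I_d -> 'I_m * 'I_m).

Lemma span_weight_gt0 (H : pred 'I_d) k : H k -> 0 < span_weight R e H k k.
Proof. by move=> Hk; rewrite mxE eqxx mulr1n mxE Hk invr_gt0 ltr0Sn. Qed.

Definition cover_weight {p} (H : 'I_p -> pred 'I_d) : 'rV[R]_d :=
  \row_k \sum_i Num.sqrt (span_weight R e (H i) k k).

Lemma cover_weight_gt0 p (H : 'I_p -> pred 'I_d) k :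
  (exists i, H i k) -> 0 < cover_weight H 0 k.
Proof.
case=> i Hik; rewrite mxE (bigD1 i) //= -[X in X < _]addr0.
rewrite ltr_leD ?sqrtr_gt0 ?span_weight_gt0 //.
by apply: sumr_ge0 => j _; apply: sqrtr_ge0.
Qed.

Lemma sum_sqrt_span_weight_mul_span_incidence (n p : nat) (H : 'I_p -> pred 'I_d) :
  \sum_(i < p) diag_sqrt (span_weight R e (H i) *t (1%:M : 'M[R]_n))
                 *m (span_incidence R e (H i) *t (1%:M : 'M[R]_n))^T
  = (diag_mx (cover_weight H) *t (1%:M : 'M[R]_n))
      *m (incidence R e *t (1%:M : 'M[R]_n))^T.
Proof.
under eq_bigr => i _ do
  rewrite diag_sqrt_diag_tensmx1 trmx_tens tensmx_mul trmx1 mulmx1.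
rewrite -tensmx_suml sum_diag_mul_span_incidence; last first.
  by move=> i k Hik; rewrite !mxE (negbTE Hik) sqrtr0.
rewrite trmx_tens trmx1 tensmx_mul mulmx1; congr (diag_mx _ *m _ *t _).
by apply/rowP => k; rewrite !mxE summxE; apply: eq_bigr => i _; rewrite !mxE eqxx mulr1n.
Qed.

End SpanWeight.

Theorem lemma9 (R : rcfType) (m d n p : nat) (e : 'I_d -> 'I_m * 'I_m)
  (r : 'I_d -> nat) (C : forall k : 'I_d, 'M[R]_(r k, n))
  (H : 'I_p -> pred 'I_d) :
  no_self_arcs e -> arcs_distinct e -> symmetric_graph e ->
  (forall i, symmetric_subgraph e (H i)) ->
  (forall k, exists i, H i k) ->
  forall x : 'cV[R]_(m * n),
    (blockdiag C *m (incidence R e *t (1%:M : 'M[R]_n))^T *m x == 0)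
    = (blockdiag C *m
         (\sum_(i < p) diag_sqrt (span_weight R e (H i) *t (1%:M : 'M[R]_n))
                         *m (span_incidence R e (H i) *t (1%:M : 'M[R]_n))^T)
         *m x == 0).
Proof.
(* Only the covering hypothesis matters: the identity holds for any arc list. *)
move=> _ _ _ _ covered x.
rewrite sum_sqrt_span_weight_mul_span_incidence mulmxA blockdiag_mul_diag_tensmx1.
rewrite -!mulmxA diag_mx_mul_eq0 // => a.
by rewrite mxE lt0r_neq0 // cover_weight_gt0.
Qed.
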